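(* Let $\mathfrak g=\mathfrak v\oplus\mathfrak z$ be a two-step nilpotent Lie algebra with inner product, $B\in\mathbb R$, $\zeta_m\in\mathfrak z^*$, and $h(p)=\tfrac12|p+B\zeta_m|^2$ on $\mathfrak g^*$. Every integral curve of the Euler vector field $E_h$ has the form $p(t)=p_{\mathfrak v}(t)+\zeta_0$, where $\zeta_0\in\mathfrak z^*$ is constant and $p_{\mathfrak v}(t)\in\mathfrak v^*$ satisfies $p_{\mathfrak v}'(t)=\mathcal A(p_{\mathfrak v}(t))$ for some linear transformation $\mathcal A$ of $\mathfrak v^*$ that is skew-symmetric with respect to the restricted inner product.
   Context: $\mathfrak g$ is two-step nilpotent (nonabelian, all brackets central) with center $\mathfrak z$ and $\mathfrak v=\mathfrak z^\perp$; $\mathfrak v^*$ (resp. $\mathfrak z^*$) are functionals vanishing on $\mathfrak z$ (resp. $\mathfrak v$); $\mathfrak g^*$ has the dual inner product, $\sharp:\mathfrak g^*\to\mathfrak g$ the associated isomorphism, $|p|^2=\langle p,\sharp p\rangle$. The Poisson bracket on $\mathfrak g^*$ is $\{f,k\}(p)=-\langle p,[df_p,dk_p]\rangle$, and the Euler vector field of $h$ is $E_h(f)=\{f,h\}$, i.e. $E_h(p)=-\mathrm{ad}^*_{dh_p}p$ with $\langle\mathrm{ad}^*_Xp,Y\rangle=-\langle p,[X,Y]\rangle$. *)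

From HB Require Import structures.
From mathcomp Require Import all_boot all_order all_algebra.
From mathcomp Require Import all_classical all_reals all_analysis.
Set Implicit Arguments. Unset Strict Implicit. Unset Printing Implicit Defensive.
Import Order.TTheory GRing.Theory Num.Theory.
Import numFieldNormedType.Exports.
Local Open Scope ring_scope.

(* The Lie algebra g is modelled as 'rV[R]_n (coordinates w.r.t. a fixed
   basis e_0..e_{n-1}); its dual g-dual is also modelled as 'rV[R]_n, via the
   dual basis, with pairing <p, X> = sum_i p_i X_i. *)

Section Defs.
Variables (R : realType) (n : nat).

Definition pair (p X : 'rV[R]_n) : R := \sum_(i < n) p 0 i * X 0 i.

Definition ipg (M : 'M[R]_n) (X Y : 'rV[R]_n) : R := (X *m M *m Y^T) 0 0.

Definition ebase (i : 'I_n) : 'rV[R]_n := delta_mx 0 i.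

(* sharp : g-dual -> g, characterised by <sharp p, Y>_g = <p, Y> *)
Definition sharp (M : 'M[R]_n) (p : 'rV[R]_n) : 'rV[R]_n := p *m invmx M.

Definition ipd (M : 'M[R]_n) (p q : 'rV[R]_n) : R := pair p (sharp M q).
Definition sqnorm (M : 'M[R]_n) (p : 'rV[R]_n) : R := ipd M p p.

Definition center (br : 'rV[R]_n -> 'rV[R]_n -> 'rV[R]_n) (X : 'rV[R]_n) : Prop :=
  forall Y, br X Y = 0.
Definition vpart br (M : 'M[R]_n) (X : 'rV[R]_n) : Prop :=
  forall Z, center br Z -> ipg M X Z = 0.
Definition vdual br (p : 'rV[R]_n) : Prop :=
  forall Z, center br Z -> pair p Z = 0.
Definition zdual br (M : 'M[R]_n) (p : 'rV[R]_n) : Prop :=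
  forall X, vpart br M X -> pair p X = 0.

(* differential dh_p in the bidual of g, identified with g : its i-th coordinate is the partial
   derivative of h at p in the direction of the i-th dual basis vector. *)
Definition dfun (h : 'rV[R]_n -> R) (p : 'rV[R]_n) : 'rV[R]_n :=
  \row_i (derive h p (ebase i)).

Definition coad br (X p : 'rV[R]_n) : 'rV[R]_n :=
  \row_j (- pair p (br X (ebase j))).

Definition euler br (h : 'rV[R]_n -> R) (p : 'rV[R]_n) : 'rV[R]_n :=
  - coad br (dfun h p) p.

Definition two_step_nilpotent (br : 'rV[R]_n -> 'rV[R]_n -> 'rV[R]_n) : Prop :=
  [/\ (forall (a : R) X Y Z, br (a *: X + Y) Z = a *: br X Z + br Y Z),
      (forall (a : R) X Y Z, br X (a *: Y + Z) = a *: br X Y + br X Z),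
      (forall X, br X X = 0),
      (forall X Y W, br (br X Y) W = 0) &
      (exists X Y, br X Y != 0)].

Definition inner_product_matrix (M : 'M[R]_n) : Prop :=
  M^T = M /\ (forall X : 'rV[R]_n, X != 0 -> 0 < ipg M X X).

End Defs.

From Pilot Require Import Defs.
From HB Require Import structures.
From mathcomp Require Import all_boot all_order all_algebra.
From mathcomp Require Import all_classical all_reals all_analysis.
Import Order.TTheory GRing.Theory Num.Theory.
Import numFieldNormedType.Exports.
Local Open Scope ring_scope.
Local Open Scope classical_set_scope.

(* The gradient of h at p is sharp(p + B zm), so E_h(p) = -ad*_{sharp(p + B zm)} p.
   Brackets are central, so E_h(p) annihilates the center and the z*-component
   z0 of an integral curve is constant.  Write p = q + z0 with q in v*.  Since
   sharp maps z* into the center, sharp(z0 + B zm) drops out of the bracket,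
   and q annihilates every bracket; hence E_h(p) = -ad*_{sharp q} z0.  This is
   linear in q, and <-ad*_{sharp q1} z0, sharp q2> = <z0, [sharp q1, sharp q2]>
   is antisymmetric in (q1, q2). *)

Lemma linear_rV_mulmx (R : comNzRingType) m n (f : 'rV[R]_m -> 'rV[R]_n) :
  linear f -> exists A : 'M[R]_(m, n), forall u, f u = u *m A.
Proof.
move=> lin_f.
pose fL : {linear 'rV[R]_m -> 'rV[R]_n} :=
  HB.pack f (GRing.isLinear.Build _ _ _ _ f lin_f).
by exists (lin1_mx fL) => u; rewrite mul_rV_lin1.
Qed.

Section Pairing.
Context {R : realType} {n : nat}.
Implicit Types (p q X Y : 'rV[R]_n).

Lemma pairE p X : pair p X = (p *m X^T) 0 0.
Proof. by rewrite /pair !mxE; apply: eq_bigr => i _; rewrite mxE. Qed.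

Lemma pairDl p q X : pair (p + q) X = pair p X + pair q X.
Proof. by rewrite !pairE mulmxDl mxE. Qed.

Lemma pairZl a p X : pair (a *: p) X = a * pair p X.
Proof. by rewrite !pairE -scalemxAl mxE. Qed.

Lemma pairNl p X : pair (- p) X = - pair p X.
Proof. by rewrite !pairE mulNmx mxE. Qed.

Lemma pairBl p q X : pair (p - q) X = pair p X - pair q X.
Proof. by rewrite pairDl pairNl. Qed.

Lemma pairDr p X Y : pair p (X + Y) = pair p X + pair p Y.
Proof. by rewrite !pairE linearD mulmxDr mxE. Qed.

Lemma pairZr a p X : pair p (a *: X) = a * pair p X.
Proof. by rewrite !pairE linearZ -scalemxAr mxE. Qed.

Lemma pairNr p X : pair p (- X) = - pair p X.
Proof. by rewrite !pairE linearN mulmxN mxE. Qed.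

Lemma pair0l X : pair 0 X = 0.
Proof. by rewrite pairE mul0mx mxE. Qed.

Lemma pair0r p : pair p 0 = 0.
Proof. by rewrite pairE trmx0 mulmx0 mxE. Qed.

Lemma pair_sumr p (c : 'I_n -> R) (F : 'I_n -> 'rV[R]_n) :
  pair p (\sum_j c j *: F j) = \sum_j c j * pair p (F j).
Proof.
rewrite /pair; under eq_bigr do rewrite summxE mulr_sumr.
rewrite exchange_big /=; apply: eq_bigr => j _; rewrite mulr_sumr.
by apply: eq_bigr => i _; rewrite mxE mulrCA.
Qed.

Lemma pair_ebasel i Y : pair (ebase R i) Y = Y 0 i.
Proof. by rewrite pairE /ebase -rowE -tr_col !mxE. Qed.

Lemma pair_mulmx_sym (S : 'M[R]_n) p q : S^T = S -> pair p (q *m S) = pair q (p *m S).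
Proof.
move=> S_sym; have trE (A : 'M[R]_1) : A 0 0 = A^T 0 0 by rewrite mxE.
by rewrite !pairE [LHS]trE !trmx_mul !trmxK S_sym mulmxA.
Qed.

End Pairing.

Definition center_mx {R : realType} {n : nat}
    (br : 'rV[R]_n -> 'rV[R]_n -> 'rV[R]_n) : 'M[R]_n :=
  (\bigcap_j kermx (\matrix_i br (ebase R i) (ebase R j)))%MS.

Section Bracket.
Context {R : realType} {n : nat} {br : 'rV[R]_n -> 'rV[R]_n -> 'rV[R]_n}.
Context (br2 : two_step_nilpotent br).
Implicit Types (p q X Y Z : 'rV[R]_n).

Lemma brZDl a X1 X2 Y : br (a *: X1 + X2) Y = a *: br X1 Y + br X2 Y.
Proof. by case: br2. Qed.

Lemma brZDr a X Y1 Y2 : br X (a *: Y1 + Y2) = a *: br X Y1 + br X Y2.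
Proof. by case: br2. Qed.

Lemma brDl X1 X2 Y : br (X1 + X2) Y = br X1 Y + br X2 Y.
Proof. by rewrite -[X1]scale1r brZDl !scale1r. Qed.

Lemma br0l Y : br 0 Y = 0.
Proof. by have /eqP := brDl 0 0 Y; rewrite addr0 eq_sym -subr_eq0 addrK => /eqP. Qed.

Lemma brDr X Y1 Y2 : br X (Y1 + Y2) = br X Y1 + br X Y2.
Proof. by rewrite -[Y1]scale1r brZDr !scale1r. Qed.

Lemma br0r X : br X 0 = 0.
Proof. by have /eqP := brDr X 0 0; rewrite addr0 eq_sym -subr_eq0 addrK => /eqP. Qed.

Lemma br_antisym X Y : br X Y = - br Y X.
Proof.
case: br2 => _ _ brXX _ _; apply/eqP; rewrite -addr_eq0.
by have := brXX (X + Y); rewrite brDl !brDr !brXX add0r addr0 addrC => ->.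
Qed.

Lemma center_br X Y : Defs.center br (br X Y).
Proof. by case: br2 => _ _ _ brbr _ W; apply: brbr. Qed.

Lemma br_centerr X Z : Defs.center br Z -> br X Z = 0.
Proof. by move=> cZ; rewrite br_antisym cZ oppr0. Qed.

Lemma br_suml Y (c : 'I_n -> R) (F : 'I_n -> 'rV[R]_n) :
  br (\sum_i c i *: F i) Y = \sum_i c i *: br (F i) Y.
Proof. by elim/big_rec2: _ => [|i a b _ <-]; [exact: br0l | rewrite brZDl]. Qed.

Lemma br_sumr X (c : 'I_n -> R) (F : 'I_n -> 'rV[R]_n) :
  br X (\sum_j c j *: F j) = \sum_j c j *: br X (F j).
Proof. by elim/big_rec2: _ => [|j a b _ <-]; [exact: br0r | rewrite brZDr]. Qed.

Lemma mul_brmx Z j : Z *m \matrix_i br (ebase R i) (ebase R j) = br Z (ebase R j).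
Proof.
rewrite mulmx_sum_row {2}[Z]row_sum_delta br_suml.
by apply: eq_bigr => i _; rewrite rowK.
Qed.

Lemma centerP Z : Defs.center br Z <-> (Z <= center_mx br)%MS.
Proof.
split=> [cZ | /sub_bigcapmxP cZ Y].
  by apply/sub_bigcapmxP => j _; rewrite sub_kermx mul_brmx cZ.
rewrite [Y]row_sum_delta br_sumr big1 // => j _.
by move: (cZ j isT); rewrite sub_kermx mul_brmx => /eqP ->; rewrite scaler0.
Qed.

Lemma vdualD p q : vdual br p -> vdual br q -> vdual br (p + q).
Proof. by move=> vp vq Z cZ; rewrite pairDl vp // vq // addr0. Qed.

Lemma vdualN p : vdual br p -> vdual br (- p).
Proof. by move=> vp Z cZ; rewrite pairNl vp // oppr0. Qed.

Lemma pair_coad X p Y : pair (coad br X p) Y = - pair p (br X Y).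
Proof.
rewrite {2}[Y]row_sum_delta br_sumr pair_sumr /pair -sumrN.
by apply: eq_bigr => j _; rewrite !mxE mulrC mulrN.
Qed.

Lemma vdual_coad X p : vdual br (coad br X p).
Proof. by move=> Z cZ; rewrite pair_coad br_centerr // pair0r oppr0. Qed.

Lemma coad_linearl p : linear (coad br ^~ p).
Proof.
move=> a X1 X2; apply/rowP => j.
by rewrite !mxE brZDl pairDr pairZr opprD mulrN.
Qed.

Lemma coad_center_vdual {X W q z} : Defs.center br W -> vdual br q ->
  coad br (X + W) (q + z) = coad br X z.
Proof.
move=> cW vq; apply/rowP => j; rewrite !mxE brDl cW addr0.
by rewrite pairDl vq ?add0r //; apply: center_br.
Qed.

End Bracket.

Section Symmetric.
Context {R : realType} {n : nat} {M : 'M[R]_n} (M_sym : M^T = M).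

Lemma ipdC p q : ipd M p q = ipd M q p.
Proof. by rewrite /ipd /sharp pair_mulmx_sym // trmx_inv M_sym. Qed.

Lemma ipd_coad_skew br z p q : two_step_nilpotent br ->
  ipd M (- coad br (sharp M p) z) q = - ipd M p (- coad br (sharp M q) z).
Proof.
move=> br2; rewrite [in RHS]ipdC /ipd !pairNl !(pair_coad br2) !opprK.
by rewrite (br_antisym br2) pairNr.
Qed.

End Symmetric.

Section InnerProduct.
Context {R : realType} {n : nat} {br : 'rV[R]_n -> 'rV[R]_n -> 'rV[R]_n} {M : 'M[R]_n}.
Context (br2 : two_step_nilpotent br) (HM : inner_product_matrix M).
Implicit Types (p q w X Z : 'rV[R]_n).

Lemma ipg_eq0 X : ipg M X X = 0 -> X = 0.
Proof. by case: (eqVneq X 0) => // /HM.2; rewrite lt0r => /andP[/eqP]. Qed.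

Lemma ipgC X Z : ipg M X Z = ipg M Z X.
Proof.
have trE (A : 'M[R]_1) : A 0 0 = A^T 0 0 by rewrite mxE.
by rewrite /ipg [LHS]trE !trmx_mul trmxK HM.1 mulmxA.
Qed.

Lemma unitmx_inner_product : M \in unitmx.
Proof.
rewrite unitmxE unitfE; apply/negP => /det0P [X /negP X_neq0 XM0].
by apply/X_neq0/eqP/ipg_eq0; rewrite /ipg XM0 mul0mx mxE.
Qed.

Lemma pair_mulmx p X : pair (p *m M) X = ipg M p X.
Proof. by rewrite pairE. Qed.

Lemma sharpK p : sharp M p *m M = p.
Proof. by rewrite /sharp -mulmxA mulVmx ?unitmx_inner_product // mulmx1. Qed.

Lemma zdual_center_mulmx Z : Defs.center br Z -> zdual br M (Z *m M).
Proof. by move=> cZ X vX; rewrite pair_mulmx ipgC vX. Qed.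

Lemma zdual_vdual_eq0 q : zdual br M q -> vdual br q -> q = 0.
Proof.
move=> zq vq; rewrite -(sharpK q).
suff -> : sharp M q = 0 by rewrite mul0mx.
apply: ipg_eq0; rewrite -pair_mulmx sharpK zq // => Z cZ.
by rewrite -pair_mulmx sharpK vq.
Qed.

Lemma center_gram_full :
  ((center_mx br)^T <= center_mx br *m M *m (center_mx br)^T)%MS.
Proof.
set C := center_mx br.
have ker0 : (C :&: kermx (M *m C^T))%MS = 0.
  apply/row_matrixP => i; rewrite row0.
  have /[!sub_capmx] /andP [/submxP [D ->]] := row_sub i (C :&: kermx (M *m C^T))%MS.
  rewrite sub_kermx => /eqP DCMC0; apply: ipg_eq0.
  by rewrite /ipg trmx_mul mulmxA -(mulmxA (D *m C)) DCMC0 mul0mx mxE.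
have gram_sub : (C *m M *m C^T <= C^T)%MS by apply: submxMl.
have rank_gram : \rank (C *m M *m C^T) = \rank C^T.
  by rewrite -mulmxA mxrank_tr -(mxrank_mul_ker C (M *m C^T)) ker0 mxrank0 addn0.
have [_] := mxrank_leqif_eq gram_sub.
by rewrite rank_gram eqxx => /esym /andP [].
Qed.

Lemma zdual_vdual_decomposition p :
  exists2 Z, Defs.center br Z & vdual br (p - Z *m M).
Proof.
set C := center_mx br.
have /submxP [D pC] : (p *m C^T <= C *m M *m C^T)%MS.
  exact: submx_trans (submxMl _ _) center_gram_full.
exists (D *m C); first by apply/(centerP br2); apply: submxMl.
move=> Z /(centerP br2) /submxP [E ->].
by rewrite pairE trmx_mul mulmxA mulmxBl pC !mulmxA subrr mul0mx mxE.
Qed.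

Lemma zdual_sharp_center w : zdual br M w -> Defs.center br (sharp M w).
Proof.
move=> zw; have [Z cZ vwZ] := zdual_vdual_decomposition w.
suff -> : w = Z *m M by rewrite /sharp -mulmxA mulmxV ?unitmx_inner_product // mulmx1.
apply/eqP; rewrite -subr_eq0; apply/eqP/zdual_vdual_eq0 => // X vX.
by rewrite pairBl zw // zdual_center_mulmx // subrr.
Qed.

End InnerProduct.

Section Derivatives.
Context {R : realType} {V : normedModType R}.

Lemma is_derive_mx_entry {m n} {a : V -> 'M[R]_(m, n)} {x v da} i j :
  is_derive x v a da -> is_derive x v (fun y => a y i j) (da i j).
Proof.
move=> [a_der <-]; have entry_der := (derivable_mxP a x v).1 a_der i j.
by apply: DeriveDef => //; rewrite (derive_mx a_der) mxE.
Qed.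

Lemma is_derive_mx {m n} {a : V -> 'M[R]_(m, n)} {x v} {da : 'M[R]_(m, n)} :
  (forall i j, is_derive x v (fun y => a y i j) (da i j)) -> is_derive x v a da.
Proof.
move=> a_der; have a_derivable : derivable a x v.
  by apply/derivable_mxP => i j; case: (a_der i j).
apply: DeriveDef => //; rewrite (derive_mx a_derivable).
by apply/matrixP => i j; rewrite mxE derive_val.
Qed.

Lemma is_derive_pair {n} {a b : V -> 'rV[R]_n} {x v da db} :
  is_derive x v a da -> is_derive x v b db ->
  is_derive x v (fun y => pair (a y) (b y)) (pair da (b x) + pair (a x) db).
Proof.
move=> a_der b_der.
have -> : (fun y => pair (a y) (b y)) = \sum_k (fun y => a y 0 k * b y 0 k).
  by apply/funext => y; rewrite fct_sumE.
rewrite /pair -big_split /=; apply: is_derive_sum => k.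
apply: is_derive_eq
  (is_deriveM (is_derive_mx_entry 0 k a_der) (is_derive_mx_entry 0 k b_der)) _.
by rewrite addrC; congr (_ + _); apply: mulrC.
Qed.

Lemma is_derive_mulmxr {m n} {a : V -> 'M[R]_(m, n)} (S : 'M[R]_n) {x v da} :
  is_derive x v a da -> is_derive x v (fun y => a y *m S) (da *m S).
Proof.
move=> a_der; apply: is_derive_mx => i j; rewrite mxE.
have -> : (fun y => (a y *m S) i j) = \sum_l (fun y => a y i l * S l j).
  by apply/funext => y; rewrite fct_sumE mxE.
apply: is_derive_sum => l.
apply: is_derive_eq
  (is_deriveM (is_derive_mx_entry i l a_der) (is_derive_cst (S l j) x v)) _.
by rewrite /GRing.scale /= mulr0 add0r mulrC.
Qed.

End Derivatives.

Lemma dfun_half_sqnorm (R : realType) n (M : 'M[R]_n) (c q : 'rV[R]_n) :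
  M^T = M -> dfun (fun q => 2^-1 * sqnorm M (q + c)) q = sharp M (q + c).
Proof.
move=> M_sym; apply/rowP => i; rewrite mxE.
have shift_der : is_derive q (ebase R i) (fun q => q + c) (ebase R i).
  by apply: is_derive_eq; rewrite addr0.
have sharp_der := is_derive_mulmxr (invmx M) shift_der.
have h_der := is_deriveZ (2^-1 : R) (is_derive_pair shift_der sharp_der).
rewrite /sqnorm /ipd /sharp derive_val.
rewrite [pair (q + c) _]pair_mulmx_sym ?trmx_inv ?M_sym // !pair_ebasel.
set y := _ 0 i; change (2^-1 * (y + y) = y).
by rewrite mulrDr mulrC -splitr.
Qed.

Lemma is_derive_0_itv_cst {R : realType} {I : set R} {f : R -> R} :
  is_interval I -> (forall t, I t -> is_derive t 1 f 0) ->
  forall s t, I s -> I t -> f s = f t.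
Proof.
move=> I_itv f_der s t; wlog st : s t / s <= t.
  by move=> wlog_st Is It; case: (leP s t) => [|/ltW] st; [|symmetry]; apply: wlog_st.
move=> Is It; have inI x : x \in `[s, t]%R -> I x.
  by rewrite in_itv /= => /andP [sx xt]; apply: (I_itv s t) => //; rewrite sx xt.
have f_derivable x : x \in `[s, t]%R -> derivable f x 1 by move=> /inI /f_der [].
have [c _] := MVT_segment st (fun x x_in => f_der x (inI x (subset_itv_oo_cc x_in)))
  (derivable_within_continuous f_derivable).
by rewrite mul0r => /eqP; rewrite subr_eq0 => /eqP.
Qed.

Lemma zdual_component_cst {R : realType} {n} {br : 'rV[R]_n -> 'rV[R]_n -> 'rV[R]_n}
    {M : 'M[R]_n} {I : set R} {p : R -> 'rV[R]_n} :
  two_step_nilpotent br -> inner_product_matrix M -> is_interval I ->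
  (forall t, I t -> derivable p t 1 /\ vdual br ('D_1 p t)) ->
  exists2 z0, zdual br M z0 & forall t, I t -> vdual br (p t - z0).
Proof.
move=> br2 HM I_itv p_der.
have [[t0 It0] | I0] := pselect (exists t, I t); last first.
  by exists 0 => [X _ | t It]; [rewrite pair0l | case: I0; exists t].
have [Z cZ vZ] := zdual_vdual_decomposition br2 HM (p t0).
exists (Z *m M) => [|t It]; first exact: zdual_center_mulmx.
rewrite -(subrK (p t0) (p t)) -addrA; apply: vdualD => // W cW.
rewrite pairBl; apply/eqP; rewrite subr_eq0; apply/eqP.
apply: (is_derive_0_itv_cst (f := fun s => pair (p s) W) I_itv) => // s Is.
have [p_derivable p'_vdual] := p_der s Is.
apply: is_derive_eq
  (is_derive_pair (derivableP p_derivable) (is_derive_cst W s 1)) _.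
by rewrite pair0r addr0 p'_vdual.
Qed.

Theorem lemma2p5 (R : realType) (n : nat)
  (br : 'rV[R]_n -> 'rV[R]_n -> 'rV[R]_n) (M : 'M[R]_n)
  (B : R) (zm : 'rV[R]_n)
  (I : set R) (p : R -> 'rV[R]_n) :
  two_step_nilpotent br ->
  inner_product_matrix M ->
  zdual br M zm ->
  open I -> is_interval I ->
  (forall t, I t -> derivable p t 1 /\
     derive p t 1 = euler br (fun q => 2^-1 * sqnorm M (q + B *: zm)) (p t)) ->
  exists (z0 : 'rV[R]_n) (A : 'M[R]_n),
    [/\ zdual br M z0,
        (forall q, vdual br q -> vdual br (q *m A)),
        (forall q1 q2, vdual br q1 -> vdual br q2 ->
           ipd M (q1 *m A) q2 = - ipd M q1 (q2 *m A)) &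
        (forall t, I t ->
           vdual br (p t - z0) /\
           derivable (fun s => p s - z0) t 1 /\
           derive (fun s => p s - z0) t 1 = (p t - z0) *m A)].
Proof.
move=> br2 HM zm_zdual _ I_itv p_sol.
have p'E t : I t -> 'D_1 p t = - coad br (sharp M (p t + B *: zm)) (p t).
  by case/p_sol => _ ->; rewrite /euler dfun_half_sqnorm //; case: HM.
have p'_vdual t : I t -> derivable p t 1 /\ vdual br ('D_1 p t).
  by move=> It; split; [case: (p_sol t It) | rewrite p'E //; apply/vdualN/vdual_coad].
have [z0 z0_zdual pz0_vdual] := zdual_component_cst br2 HM I_itv p'_vdual.
have w_center : Defs.center br (sharp M (z0 + B *: zm)).
  apply: zdual_sharp_center => // X vX.
  by rewrite pairDl pairZl z0_zdual // zm_zdual // mulr0 addr0.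
have [A AE] : exists A, forall q, - coad br (sharp M q) z0 = q *m A.
  apply: linear_rV_mulmx => a q1 q2.
  by rewrite /sharp mulmxDl -scalemxAl coad_linearl // opprD scalerN.
exists z0, A; split => // [q _ | q1 q2 _ _ | t It].
- by rewrite -AE; apply/vdualN/vdual_coad.
- by rewrite -!AE ipd_coad_skew //; case: HM.
have pz0_der := is_deriveB (derivableP (p_sol t It).1) (is_derive_cst z0 t 1).
split; [exact: pz0_vdual | split; first exact: ex_derive].
rewrite derive_val subr0 p'E // -AE -{1 2}(subrK z0 (p t)) -addrA.
by rewrite /sharp mulmxDl (coad_center_vdual br2 w_center (pz0_vdual t It)).
Qed.
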